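(* In the setting described in the context, let \texttt{Orienteering} be a routine with constant-factor guarantee $1/\lambda$ ($\lambda\ge1$): for any node weights $\nu(j)\ge0$ it returns a path $\hat\rho\in\mathcal{X}(p_s,\omega)$ with $\sum_{j}\mathbb{I}_j(\hat\rho)\nu(j)\ge\frac1\lambda\sum_j\mathbb{I}_j(\rho)\nu(j)$ for all $\rho\in\mathcal{X}(p_s,\omega)$. For $\ell=1,2,\dots$, let $\hat\rho_\ell$ be the path returned by \texttt{Orienteering} with node weights $$\nu_\ell(j) = \zeta_j d_j\prod_{\iota=1}^{\ell-1}\left(1-\mathbb{E}\left[z_j(\hat{\rho}_{\iota})\right]\right).$$ Let $X^*_K=\{\rho_k^*\}_{k=1}^K$ be an optimal solution to the Team Surviving Orienteers problem with $K$ robots. Then for every $L\ge K$, with $\hat{X}_L = \{\hat{\rho}_{\ell}\}_{\ell=1}^L$, $$J(\hat{X}_L) \ge \left(1-e^{-\frac{p_sL}{\lambda K}}\right)J(X^*_K),$$ where $J(\{\rho_k\}_{k=1}^m)=\sum_{j=1}^V d_j\,\mathbb{E}\big[1-\prod_{k=1}^m(1-z_j(\rho_k))\big]$ is the weighted expected number of nodes visited by at least one robot.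
   Context: Let $\mathcal{G}=(\mathcal{V},\mathcal{E})$ be a finite simple graph with node set $\mathcal{V}=\{1,\dots,V\}$ and edge weights $\omega:\mathcal{E}\to(0,1]$ (survival probabilities). A path $\rho$ is a sequence of nodes $\rho(0),\dots,\rho(\lvert\rho\rvert)$ with $(\rho(n-1),\rho(n))\in\mathcal{E}$ for each $n$. For a path $\rho$, let $s_n(\rho)$, $n=1,\dots,\lvert\rho\rvert$, be independent Bernoulli variables with $\mathbb{P}\{s_n(\rho)=1\}=\omega((\rho(n-1),\rho(n)))$, $a_n(\rho)=\prod_{i=1}^n s_i(\rho)$, and $z_j(\rho)=\max_{n=1,\dots,\lvert\rho\rvert} a_n(\rho)\,\mathbb{I}\{\rho(n)=j\}$; random variables for distinct paths are independent. Let $\mathbb{I}_j(\rho)=1$ if $\rho(n)=j$ for some $n\in\{1,\dots,\lvert\rho\rvert\}$, else $0$. Given start node $v_s$, terminal node $v_t$ and $p_s\in(0,1]$, $\mathcal{X}(p_s,\omega)$ is the (assumed nonempty) set of paths $\rho$ with $\rho(0)=v_s$, $\rho(\lvert\rho\rvert)=v_t$ and $\mathbb{P}\{a_{\lvert\rho\rvert}(\rho)=1\}\ge p_s$ (equivalently, an orienteering feasibility constraint on the graph with edge weights $-\log\omega(e)$ and budget $-\log p_s$). Node priorities $d_j>0$ are given. The Team Surviving Orienteers problem with $K$ robots is to choose $\rho_1,\dots,\rho_K\in\mathcal{X}(p_s,\omega)$ maximizing $J(\{\rho_k\}_{k=1}^K)$. Define $\zeta_j=\max_{\rho\in\mathcal{X}(p_s,\omega)}\mathbb{E}[z_j(\rho)]$.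 *)

From HB Require Import structures.
From mathcomp Require Import all_boot all_order all_algebra.
From mathcomp Require Import reals sequences exp.
Set Implicit Arguments. Unset Strict Implicit. Unset Printing Implicit Defensive.
Import Order.TTheory GRing.Theory Num.Theory.
Local Open Scope ring_scope.

Section TSO.
Variable R : realType.
Variable T : finType.

(* A path rho is a nonempty sequence of nodes rho(0) :: rho(1) :: ... :: rho(|rho|).
   rho(n) = nth x0 rho n (the default is irrelevant for n <= |rho|). *)
Definition plen (rho : seq T) : nat := (size rho).-1.

Definition edge_probs (omega : T -> T -> R) (rho : seq T) : seq R :=
  if rho is x :: r then pairmap omega x r else [::].

Fixpoint bseqs (n : nat) : seq (seq bool) :=
  if n is n'.+1 then [seq b :: s | b <- [:: true; false], s <- bseqs n'] else [:: [::]].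

Fixpoint bern_weight (ps : seq R) (s : seq bool) : R :=
  match ps, s with
  | p :: ps', b :: s' => (if b then p else 1 - p) * bern_weight ps' s'
  | _, _ => 1
  end.

(* Expectation of a function of the outcome (s_1..s_|rho|) of path rho. *)
Definition Epath (omega : T -> T -> R) (rho : seq T) (f : seq bool -> R) : R :=
  \sum_(s <- bseqs (plen rho)) bern_weight (edge_probs omega rho) s * f s.

(* a_n = prod_{i=1}^n s_i  (s is stored 0-indexed: s_i = nth false s (i-1)). *)
Definition a_n (n : nat) (s : seq bool) : R := (all id (take n s))%:R.

(* z_j(rho) = max_{n=1..|rho|} a_n * I{rho(n) = j}  (0 if |rho| = 0). *)
Definition z_j (j : T) (rho : seq T) (s : seq bool) : R :=
  \big[Num.max/0]_(i < plen rho) (a_n i.+1 s * (nth j rho i.+1 == j)%:R).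

Definition Ez (omega : T -> T -> R) (j : T) (rho : seq T) : R :=
  Epath omega rho (z_j j rho).

Definition surv_prob (omega : T -> T -> R) (rho : seq T) : R :=
  Epath omega rho (a_n (plen rho)).

Definition Ivis (j : T) (rho : seq T) : R := (j \in behead rho)%:R.

Definition inX (e : rel T) (omega : T -> T -> R) (vs vt : T) (ps : R)
  (rho : seq T) : Prop :=
  exists rest, [/\ rho = vs :: rest, path e vs rest, last vs rest = vt
                 & ps <= surv_prob omega rho].

(* Joint expectation over the product space of independent outcomes of a list
   of paths (random variables for distinct paths are independent). *)
Fixpoint Ejoint (omega : T -> T -> R) (rs : seq (seq T))
  (f : seq (seq bool) -> R) : R :=
  if rs is rho :: rs' then
    \sum_(s <- bseqs (plen rho))
       bern_weight (edge_probs omega rho) s *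
       Ejoint omega rs' (fun ss => f (s :: ss))
  else f [::].

Definition Jobj (omega : T -> T -> R) (d : T -> R) (rs : seq (seq T)) : R :=
  \sum_j d j * Ejoint omega rs
     (fun ss => 1 - \prod_(k < size rs) (1 - z_j j (nth [::] rs k) (nth [::] ss k))).

Definition greedy_nu (omega : T -> T -> R) (zeta d : T -> R)
  (prev : seq (seq T)) (j : T) : R :=
  zeta j * d j * \prod_(r <- prev) (1 - Ez omega j r).

Fixpoint greedy (omega : T -> T -> R) (zeta d : T -> R)
  (Orient : (T -> R) -> seq T) (L : nat) : seq (seq T) :=
  if L is L'.+1 then
    let prev := greedy omega zeta d Orient L' in
    rcons prev (Orient (greedy_nu omega zeta d prev))
  else [::].

End TSO.

Arguments Ivis {R T} j rho.
Arguments a_n {R} n s.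
Arguments z_j {R T} j rho s.

From HB Require Import structures.
From mathcomp Require Import all_boot all_order all_algebra.
From mathcomp Require Import reals sequences exp.
From mathcomp Require Import ring lra.
Import Order.TTheory GRing.Theory Num.Theory.
Local Open Scope ring_scope.
Set Implicit Arguments. Unset Strict Implicit.

(* Since the paths are independent, J(X) = sum_j d_j (1 - prod_(rho in X) (1 - E z_j(rho))).
   On a feasible path p_s I_j(rho) <= E z_j(rho) <= zeta_j I_j(rho), so the weights nu_l
   turn the 1/lambda guarantee of the orienteering routine into a lower bound on the
   marginal gain of rho_hat_l: by a union bound over the K paths of X*_K, it is at least
   p_s/(lambda K) times the gap J(X*_K) - J(hat X_(l-1)).  The gap thus shrinks by a factor
   1 - p_s/(lambda K) per step, and (1 - x)^L <= e^(-xL). *)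

Section BernoulliProducts.
Variable R : realType.

Definition prob_seq (ps : seq R) : bool := all (fun p => 0 <= p <= 1) ps.

Lemma sum_bern_weight n (ps : seq R) :
  size ps = n -> \sum_(s <- bseqs n) bern_weight ps s = 1.
Proof.
elim: n ps => [|n IH] [|p ps] //=; first by rewrite big_seq1.
move=> [] /IH sum1.
rewrite big_cat big_cat /= !big_map big_nil addr0 /=.
by rewrite -!mulr_sumr sum1 !mulr1 addrC subrK.
Qed.

Lemma bern_weight_ge0 (ps : seq R) s : prob_seq ps -> 0 <= bern_weight ps s.
Proof.
elim: ps s => [|p ps IH] [|b s] //= /andP[/andP[p0 p1] ps01].
by apply: mulr_ge0; [case: b; rewrite ?subr_ge0 | exact: IH].
Qed.

Lemma prodr_1B_in01 (I : eqType) (X : seq I) (x : I -> R) :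
  (forall r, r \in X -> 0 <= x r <= 1) -> 0 <= \prod_(r <- X) (1 - x r) <= 1.
Proof.
elim: X => [|a X IH] x01; first by rewrite big_nil ler01 lexx.
have /andP[q0 q1] : 0 <= \prod_(r <- X) (1 - x r) <= 1.
  by apply: IH => r rX; apply: x01; rewrite inE rX orbT.
have /andP[xa0 xa1] := x01 a (mem_head _ _).
rewrite big_cons; apply/andP; split; nra.
Qed.

Lemma union_bound (I : eqType) (X : seq I) (x : I -> R) :
  (forall r, r \in X -> 0 <= x r <= 1) ->
  1 - \prod_(r <- X) (1 - x r) <= \sum_(r <- X) x r.
Proof.
elim: X => [|a X IH] x01; first by rewrite !big_nil subrr.
have x01' r : r \in X -> 0 <= x r <= 1.
  by move=> rX; apply: x01; rewrite inE rX orbT.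
have /andP[q0 q1] := prodr_1B_in01 x01'.
have /andP[xa0 xa1] := x01 a (mem_head _ _).
have := IH x01'; rewrite !big_cons.
set P := \prod_(r <- X) _; set S := \sum_(r <- X) _ => HS.
have : x a * P <= x a by rewrite -[leRHS]mulr1 ler_wpM2l.
nra.
Qed.

Lemma expr1B_le_expR (a : R) n : a <= 1 -> (1 - a) ^+ n <= expR (- a * n%:R).
Proof.
move=> a1; rewrite expRM_natr; apply: lerXn2r; rewrite ?nnegrE ?subr_ge0 //.
  exact: expR_ge0.
exact: expR_ge1Dx.
Qed.

Lemma geometric_gap_bound (J : nat -> R) (opt a : R) L :
  0 <= a <= 1 -> 0 <= opt -> J 0%N = 0 ->
  (forall l, a * (opt - J l) <= J l.+1 - J l) ->
  (1 - expR (- a * L%:R)) * opt <= J L.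
Proof.
move=> /andP[a0 a1] opt0 J0 step.
have gap l : opt - J l <= (1 - a) ^+ l * opt.
  elim: l => [|l IH]; first by rewrite J0 subr0 expr0 mul1r.
  have := step l; have : (1 - a) * (opt - J l) <= (1 - a) * ((1 - a) ^+ l * opt).
    by apply: ler_wpM2l; rewrite ?subr_ge0.
  rewrite exprS -mulrA; nra.
have := ler_wpM2r opt0 (expr1B_le_expR L a1).
have := gap L; nra.
Qed.

End BernoulliProducts.

Section PathExpectations.
Variables (R : realType) (T : finType) (omega : T -> T -> R).

Lemma size_edge_probs rho : size (edge_probs omega rho) = plen rho.
Proof. by case: rho => //= x r; rewrite size_pairmap. Qed.

Lemma Epath_cst rho c : Epath omega rho (fun=> c) = c.
Proof. by rewrite /Epath -mulr_suml (sum_bern_weight (size_edge_probs rho)) mul1r. Qed.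

Lemma Epath_affine rho a b f :
  Epath omega rho (fun s => a + b * f s) = a + b * Epath omega rho f.
Proof.
rewrite /Epath; under eq_bigr do rewrite mulrDr.
rewrite big_split /= -mulr_suml (sum_bern_weight (size_edge_probs rho)) mul1r.
by rewrite mulr_sumr; congr (_ + _); apply: eq_bigr => s _; rewrite mulrCA.
Qed.

Lemma ler_Epath rho f g : prob_seq (edge_probs omega rho) ->
  (forall s, f s <= g s) -> Epath omega rho f <= Epath omega rho g.
Proof.
move=> rho01 fg; apply: ler_sum => s _.
by apply: ler_wpM2l; [exact: bern_weight_ge0 | exact: fg].
Qed.

Lemma a_n_in01 n s : 0 <= (a_n n s : R) <= 1.
Proof. by rewrite /a_n; case: all; rewrite /= ?lexx ?ler01. Qed.

Lemma Ivis_in01 (j : T) rho : 0 <= (Ivis j rho : R) <= 1.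
Proof. by rewrite /Ivis; case: (j \in _); rewrite /= ?lexx ?ler01. Qed.

Lemma z_j_ge0 (j : T) rho s : 0 <= (z_j j rho s : R).
Proof.
apply: (big_ind (fun x : R => 0 <= x)) => // [x y x0 y0 | i _].
  by rewrite le_max x0.
by apply: mulr_ge0; [case/andP: (a_n_in01 i.+1 s) | exact: ler0n].
Qed.

Lemma z_j_le_Ivis (j : T) rho s : (z_j j rho s : R) <= Ivis j rho.
Proof.
have /andP[I0 I1] := Ivis_in01 j rho.
apply: bigmax_le => // i _; case: eqP => [rho_ij | _]; last by rewrite mulr0.
have -> : Ivis j rho = 1 :> R.
  rewrite /Ivis; apply/eqP; rewrite pnatr_eq1 eqb1; apply/(nthP j).
  by exists i; rewrite ?size_behead ?nth_behead.
by rewrite mulr1; case/andP: (a_n_in01 i.+1 s).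
Qed.

(* Surviving the whole path means surviving up to any visit of j. *)
Lemma Ivis_a_n_le_z_j (j : T) rho s : Ivis j rho * a_n (plen rho) s <= (z_j j rho s : R).
Proof.
rewrite /Ivis; case: (boolP (j \in behead rho)) => [|_]; last by rewrite mul0r z_j_ge0.
case/(nthP j) => i; rewrite size_behead nth_behead => ilt rho_ij.
rewrite mul1r; apply: le_trans (le_bigmax _ _ (Ordinal ilt)).
rewrite /= rho_ij eqxx mulr1 /a_n.
case surv: (all id (take (plen rho) s)) => //.
move: surv; rewrite -(cat_take_drop i.+1 (take (plen rho) s)) all_cat take_takel //.
by case/andP=> ->.
Qed.

Section ProbabilisticEdges.
Variable rho : seq T.
Hypothesis rho01 : prob_seq (edge_probs omega rho).

Lemma Ez_ge0 j : 0 <= Ez omega j rho.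
Proof. by rewrite -(Epath_cst rho 0); apply: ler_Epath => // s; exact: z_j_ge0. Qed.

Lemma Ez_le_Ivis j : Ez omega j rho <= Ivis j rho.
Proof.
rewrite -[leRHS](Epath_cst rho); apply: ler_Epath => // s; exact: z_j_le_Ivis.
Qed.

Lemma Ivis_surv_le_Ez j : Ivis j rho * surv_prob omega rho <= Ez omega j rho.
Proof.
rewrite /surv_prob -[leLHS]add0r -Epath_affine.
by apply: ler_Epath => // s; rewrite add0r Ivis_a_n_le_z_j.
Qed.

End ProbabilisticEdges.

Lemma eq_Ejoint rs f g : f =1 g -> Ejoint omega rs f = Ejoint omega rs g.
Proof.
elim: rs f g => [|r rs IH] f g fg /=; first exact: fg.
by apply: eq_bigr => s _; congr (_ * _); apply: IH => ss.
Qed.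

Lemma Ejoint_affine rs a b f :
  Ejoint omega rs (fun ss => a + b * f ss) = a + b * Ejoint omega rs f.
Proof.
elim: rs a b f => [|r rs IH] a b f //=; under eq_bigr do rewrite IH.
exact: (Epath_affine r a b (fun s => Ejoint omega rs (fun ss => f (s :: ss)))).
Qed.

Lemma Ejoint_prod rs (h : seq T -> seq bool -> R) :
  Ejoint omega rs (fun ss => \prod_(k < size rs) h (nth [::] rs k) (nth [::] ss k)) =
  \prod_(k < size rs) Epath omega (nth [::] rs k) (h (nth [::] rs k)).
Proof.
elim: rs => [|r rs IH] /=; first by rewrite !big_ord0.
rewrite big_ord_recl /Epath mulr_suml; apply: eq_bigr => s _.
rewrite -mulrA; congr (_ * _); rewrite -IH -[RHS]add0r -Ejoint_affine.
by apply: eq_Ejoint => ss; rewrite add0r big_ord_recl.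
Qed.

Definition unvisited_prob j (rs : seq (seq T)) : R :=
  \prod_(r <- rs) (1 - Ez omega j r).

Lemma Jobj_unvisited d rs :
  Jobj omega d rs = \sum_j d j * (1 - unvisited_prob j rs).
Proof.
apply: eq_bigr => j _; congr (_ * _).
rewrite (eq_Ejoint _ (g := fun ss => 1 + (-1) *
    \prod_(k < size rs) (fun r s => 1 - z_j j r s) (nth [::] rs k) (nth [::] ss k))).
  rewrite Ejoint_affine (Ejoint_prod rs (fun r s => 1 - z_j j r s)) mulN1r.
  rewrite /unvisited_prob (big_nth [::]) big_mkord.
  congr (1 - _); apply: eq_bigr => k _.
  by rewrite /Ez -mulN1r -Epath_affine; apply: eq_bigr => s _; rewrite mulN1r.
by move=> ss; rewrite mulN1r.
Qed.

Lemma Jobj_nil d : Jobj omega d [::] = 0.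
Proof.
by rewrite Jobj_unvisited big1 // => j _; rewrite /unvisited_prob big_nil subrr mulr0.
Qed.

Lemma Jobj_rcons_sub d rs r : Jobj omega d (rcons rs r) - Jobj omega d rs =
  \sum_j d j * unvisited_prob j rs * Ez omega j r.
Proof.
rewrite !Jobj_unvisited -sumrB; apply: eq_bigr => j _.
rewrite /unvisited_prob big_rcons /=; ring.
Qed.

End PathExpectations.

Section GreedyTeam.
Variables (R : realType) (T : finType) (e : rel T) (omega : T -> T -> R).
Variables (vs vt : T) (ps lambda : R) (d zeta : T -> R).
Variable Orient : (T -> R) -> seq T.

Local Notation feasible := (inX e omega vs vt ps).
Local Notation q := (unvisited_prob omega).
Local Notation J := (Jobj omega d).
Local Notation G := (greedy omega zeta d Orient).

Hypothesis omega_in01 : forall x y, e x y -> 0 < omega x y <= 1.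
Hypothesis ps_ge0 : 0 <= ps.
Hypothesis lambda_gt0 : 0 < lambda.
Hypothesis d_ge0 : forall j, 0 <= d j.
Hypothesis zeta_ub : forall j rho, feasible rho -> Ez omega j rho <= zeta j.
Hypothesis zeta_attained : forall j, exists2 rho, feasible rho & Ez omega j rho = zeta j.
Hypothesis Orient_spec : forall nu : T -> R, (forall j, 0 <= nu j) ->
  feasible (Orient nu) /\
  forall rho, feasible rho ->
    lambda^-1 * (\sum_j Ivis j rho * nu j) <= \sum_j Ivis j (Orient nu) * nu j.

Lemma feasible_prob_seq rho : feasible rho -> prob_seq (edge_probs omega rho).
Proof.
case=> r [-> + _ _] /=; elim: r vs => //= y r IH x /andP[exy /IH ->].
by case/andP: (omega_in01 exy) => /ltW -> ->.
Qed.

Lemma Ez_in01 j rho : feasible rho -> 0 <= Ez omega j rho <= 1.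
Proof.
move/feasible_prob_seq=> rho01; rewrite Ez_ge0 //=.
by apply: le_trans (Ez_le_Ivis rho01 j) _; case/andP: (Ivis_in01 R j rho).
Qed.

Lemma zeta_in01 j : 0 <= zeta j <= 1.
Proof. by case: (zeta_attained j) => rho /Ez_in01 + <-; apply. Qed.

Lemma Ez_le_Ivis_zeta j rho : feasible rho -> Ez omega j rho <= Ivis j rho * zeta j.
Proof.
move=> rhoX; have := Ez_le_Ivis (feasible_prob_seq rhoX) j.
by rewrite /Ivis; case: (j \in _) => /= ?; rewrite ?mul1r ?mul0r // zeta_ub.
Qed.

Lemma ps_Ivis_zeta_le_Ez j rho : feasible rho -> ps * Ivis j rho * zeta j <= Ez omega j rho.
Proof.
move=> rhoX; apply: le_trans (Ivis_surv_le_Ez (feasible_prob_seq rhoX) j).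
have /andP[_ z1] := zeta_in01 j; have /andP[I0 _] := Ivis_in01 R j rho.
have ps_surv : ps <= surv_prob omega rho by case: rhoX => r [].
by rewrite (le_trans (ler_wpM2l _ z1)) ?mulr_ge0 // mulr1 mulrC ler_wpM2l.
Qed.

Lemma unvisited_in01 j rs : (forall r, r \in rs -> feasible r) -> 0 <= q j rs <= 1.
Proof. by move=> rsX; apply: prodr_1B_in01 => r /rsX; exact: Ez_in01. Qed.

Lemma Jobj_ge0 rs : (forall r, r \in rs -> feasible r) -> 0 <= J rs.
Proof.
move=> rsX; rewrite Jobj_unvisited; apply: sumr_ge0 => j _.
by rewrite mulr_ge0 // subr_ge0; case/andP: (unvisited_in01 j rsX).
Qed.

Lemma greedy_nu_ge0 rs : (forall r, r \in rs -> feasible r) ->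
  forall j, 0 <= greedy_nu omega zeta d rs j.
Proof.
move=> rsX j; have /andP[z0 _] := zeta_in01 j; have /andP[q0 _] := unvisited_in01 j rsX.
by rewrite !mulr_ge0.
Qed.

Lemma greedy_feasible l r : r \in G l -> feasible r.
Proof.
elim: l r => [|l IH] r //=; rewrite mem_rcons inE => /orP[/eqP-> | /IH //].
exact: (Orient_spec (greedy_nu_ge0 IH)).1.
Qed.

Lemma Jobj_gap_le X rs :
  (forall r, r \in X -> feasible r) -> (forall r, r \in rs -> feasible r) ->
  J X - J rs <= \sum_(r <- X) \sum_j d j * q j rs * Ez omega j r.
Proof.
move=> XX rsX; rewrite exchange_big !Jobj_unvisited -sumrB; apply: ler_sum => j _.
under eq_bigr do rewrite -mulrA.
rewrite -mulrBr -mulr_sumr ler_wpM2l // -mulr_sumr.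
have /andP[qrs0 qrs1] := unvisited_in01 j rsX.
have /andP[qX0 qX1] := unvisited_in01 j XX.
have := union_bound (fun r rX => Ez_in01 j (XX r rX)); rewrite -/(q j X) => ub.
have : q j rs * (1 - q j X) <= q j rs * \sum_(r <- X) Ez omega j r by rewrite ler_wpM2l.
nra.
Qed.

(* With the weights [greedy_nu], the orienteering objective of a path bounds its
   marginal gain from above, and [ps] times the objective bounds it from below. *)
Lemma greedy_gain rs rho :
  (forall r, r \in rs -> feasible r) -> feasible rho ->
  ps / lambda * \sum_j d j * q j rs * Ez omega j rho <=
  J (rcons rs (Orient (greedy_nu omega zeta d rs))) - J rs.
Proof.
move=> rsX rhoX; set nu := greedy_nu omega zeta d rs.
have [hatX approx] := Orient_spec (greedy_nu_ge0 rsX).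
have dq0 j : 0 <= d j * q j rs by have /andP[? _] := unvisited_in01 j rsX; rewrite mulr_ge0.
rewrite Jobj_rcons_sub -mulrA.
apply: (le_trans (y := ps * \sum_j Ivis j (Orient nu) * nu j)).
  rewrite ler_wpM2l //; apply: le_trans (approx _ rhoX).
  apply: ler_wpM2l; first by rewrite invr_ge0 ltW.
  apply: ler_sum => j _.
  have := ler_wpM2l (dq0 j) (Ez_le_Ivis_zeta j rhoX); rewrite /nu /greedy_nu -/(q j rs); lra.
rewrite mulr_sumr; apply: ler_sum => j _.
have := ler_wpM2l (dq0 j) (ps_Ivis_zeta_le_Ez j hatX); rewrite /nu /greedy_nu -/(q j rs); lra.
Qed.

Lemma greedy_step K X l :
  (0 < K)%N -> size X = K -> (forall r, r \in X -> feasible r) ->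
  ps / (lambda * K%:R) * (J X - J (G l)) <= J (G l.+1) - J (G l).
Proof.
move=> K_gt0 sizeX XX; have GX := @greedy_feasible l.
have Kr_gt0 : 0 < K%:R :> R by rewrite ltr0n.
have -> : ps / (lambda * K%:R) * (J X - J (G l)) = ps / lambda * (J X - J (G l)) / K%:R.
  by field; rewrite !gt_eqF.
rewrite ler_pdivrMr // -sizeX mulr_natr -iter_addr_0 -count_predT -big_const_seq.
have c_ge0 : 0 <= ps / lambda by rewrite divr_ge0 // ltW.
apply: (le_trans (ler_wpM2l c_ge0 (Jobj_gap_le XX GX))).
by rewrite mulr_sumr big_seq [leRHS]big_seq; apply: ler_sum => r /XX; exact: greedy_gain.
Qed.

End GreedyTeam.

Theorem theorem2 (R : realType) (T : finType) (e : rel T)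
  (omega : T -> T -> R) (vs vt : T) (ps lambda : R) (d zeta : T -> R)
  (Orient : (T -> R) -> seq T) (K : nat) (Xstar : seq (seq T)) (L : nat) :
  (* finite simple graph with edge survival probabilities in (0,1] *)
  (forall x y, e x y = e y x) ->
  (forall x, ~~ e x x) ->
  (forall x y, e x y -> 0 < omega x y <= 1) ->
  (forall x y, e x y -> omega x y = omega y x) ->
  0 < ps <= 1 ->
  (forall j, 0 < d j) ->
  (exists rho, inX e omega vs vt ps rho) ->
  (* zeta_j = max_{rho in X} E[z_j(rho)] *)
  (forall j, (forall rho, inX e omega vs vt ps rho -> Ez omega j rho <= zeta j) /\
             exists2 rho, inX e omega vs vt ps rho & Ez omega j rho = zeta j) ->
  (* Orienteering routine with guarantee 1/lambda *)
  1 <= lambda ->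
  (forall nu : T -> R, (forall j, 0 <= nu j) ->
     inX e omega vs vt ps (Orient nu) /\
     forall rho, inX e omega vs vt ps rho ->
       lambda^-1 * (\sum_j Ivis j rho * nu j) <= \sum_j Ivis j (Orient nu) * nu j) ->
  (* X*_K optimal for the Team Surviving Orienteers problem with K robots *)
  (0 < K)%N ->
  size Xstar = K ->
  (forall rho, rho \in Xstar -> inX e omega vs vt ps rho) ->
  (forall Y : seq (seq T), size Y = K ->
     (forall rho, rho \in Y -> inX e omega vs vt ps rho) ->
     Jobj omega d Y <= Jobj omega d Xstar) ->
  (K <= L)%N ->
  (1 - expR (- (ps * L%:R) / (lambda * K%:R))) * Jobj omega d Xstar
    <= Jobj omega d (greedy omega zeta d Orient L).
Proof.
move=> _ _ omega_in01 _ /andP[ps_gt0 ps_le1] d_gt0 _ zeta_max lambda_ge1 Orient_spec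
  K_gt0 sizeX XX _ _.
have lambda_gt0 : 0 < lambda := lt_le_trans ltr01 lambda_ge1.
have d_ge0 j : 0 <= d j := ltW (d_gt0 j).
have zeta_ub j := (zeta_max j).1; have zeta_attained j := (zeta_max j).2.
set a := ps / (lambda * K%:R).
have a01 : 0 <= a <= 1.
  have K_ge1 : 1 <= K%:R :> R by rewrite ler1n.
  have lambdaK_ge1 : 1 <= lambda * K%:R by nra.
  have lambdaK_gt0 : 0 < lambda * K%:R := lt_le_trans ltr01 lambdaK_ge1.
  rewrite /a ler_pdivrMr // mul1r (le_trans ps_le1) // andbT.
  by rewrite divr_ge0 // ltW.
have -> : - (ps * L%:R) / (lambda * K%:R) = - a * L%:R by rewrite /a; ring.
apply: (geometric_gap_bound (J := fun l => Jobj omega d (greedy omega zeta d Orient l))) a01 _ _ _.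
- by apply: (Jobj_ge0 omega_in01 d_ge0); exact: XX.
- exact: Jobj_nil.
- move=> l; exact: (greedy_step omega_in01 (ltW ps_gt0) lambda_gt0 d_ge0 zeta_ub
    zeta_attained Orient_spec l K_gt0 sizeX XX).
Qed.
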